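(* Let $\mathcal G=(\mathcal V,\mathcal E)$ be a hypergraph with $\mathcal V=[n]$, all of whose edges are nonempty, with special vertices $\mathcal V^{\mathrm{sp}}$, and let $\mathbf m\in\mathbb Z_{\ge0}^n$. Then, as polynomials in $q$ (equivalently, for every positive integer $q$), \[ {}_{\mathbf m}\Pi^{\mathrm{mark}}_{\mathcal G}(q)=\sum_{\underline{\boldsymbol\lambda}\in S(\mathbf m)}\frac{\Pi_{\mathcal G(\underline{\boldsymbol\lambda},\mathbf m)}(q)}{\prod_{i\in\mathrm{supp}(\mathbf m)}\prod_{k\ge1}\bigl(d_k^{\boldsymbol\lambda_i}\bigr)!}. \]
   Context: Hypergraph, special vertices $\mathcal V^{\mathrm{sp}}\subseteq\mathcal V=[n]$, and ${}_{\mathbf m}\Pi^{\mathrm{mark}}_{\mathcal G}(q)$: for $q\in\mathbb N$, the number of maps $\Gamma$ assigning to each vertex $v$ a finite multiset $\Gamma(v)$ of elements of $\{1,\dots,q\}$ with $\Gamma(v)$ a set for $v\notin\mathcal V^{\mathrm{sp}}$, $|\Gamma(v)|=m_v$ (with multiplicity), and, for each edge $e$, the underlying sets of $\Gamma(v)$, $v\in e$, having empty common intersection. For a hypergraph $\mathcal H$, $\Pi_{\mathcal H}(q)$ is its ordinary chromatic polynomial: the number of maps $c$ from the vertex set to $\{1,\dots,q\}$ such that no edge is monochromatic (i.e. for each edge $e$, $c$ is not constant on $e$). A partition $\lambda$ of $m$ is a weakly decreasing tuple of positive integers summing to $m$; $\ell(\lambda)$ is its number of parts and $d_k^\lambda$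 the number of parts equal to $k$; the empty partition of $0$ has length $0$. $S(\mathbf m)$ is the set of tuples $\underline{\boldsymbol\lambda}=(\boldsymbol\lambda_i)_{i\in[n]}$ with $\boldsymbol\lambda_i$ a partition of $m_i$ and $\boldsymbol\lambda_i=(1^{m_i})$ for $i\notin\mathcal V^{\mathrm{sp}}$. For $\underline{\boldsymbol\lambda}\in S(\mathbf m)$, $\mathcal G(\underline{\boldsymbol\lambda},\mathbf m)$ is the hypergraph with vertex set $\{(i,r): i\in\mathrm{supp}(\mathbf m),\ 1\le r\le\ell(\boldsymbol\lambda_i)\}$ and edges: (a) $\{(i,r),(i,s)\}$ for each $i\in\mathrm{supp}(\mathbf m)$ and $1\le r<s\le\ell(\boldsymbol\lambda_i)$ (each vertex $i$ is replaced by a clique of size $\ell(\boldsymbol\lambda_i)$); (b) for each edge $\{i_1,\dots,i_k\}\in\mathcal E$ contained in $\mathrm{supp}(\mathbf m)$ and each choice $1\le r_j\le\ell(\boldsymbol\lambda_{i_j})$, the edge $\{(i_1,r_1),\dots,(i_k,r_k)\}$. *)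

From HB Require Import structures.
From mathcomp Require Import all_boot all_order all_algebra.
Set Implicit Arguments. Unset Strict Implicit. Unset Printing Implicit Defensive.

(* total multiplicity; every count/part/length below is bounded by it *)
Definition msum n (m : 'I_n -> nat) : nat := \sum_(i < n) m i.

(* A finite multiset of colours in {1..q} ('I_q) is represented by its
   multiplicity function G v : 'I_q -> nat; since |Gamma(v)| = m v <= msum m,
   multiplicities fit in 'I_(msum m).+1. *)
Definition marked_count n (E : {set {set 'I_n}}) (sp : {set 'I_n})
    (m : 'I_n -> nat) (q : nat) : nat :=
  #|[pred G : {ffun 'I_n -> {ffun 'I_q -> 'I_(msum m).+1}} |
     [&& [forall v, \sum_(c < q) (G v c : nat) == m v],
         [forall v, (v \notin sp) ==> [forall c, (G v c : nat) <= 1]] &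
         [forall e in E, ~~ [exists c, [forall v in e, 0 < (G v c : nat)]]]]]|.

Definition chrom_count (V : finType) (F : {set {set V}}) (q : nat) : nat :=
  #|[pred c : {ffun V -> 'I_q} |
     [forall e in F, [exists x in e, exists y in e, c x != c y]]]|.

Definition is_partition (k : nat) (s : seq nat) : bool :=
  [&& sorted geq s, all (fun x => 0 < x) s & sumn s == k].

(* tuples of partitions (lambda_i)_i; lambda_i is a partition of m i, so it has
   length <= msum m and parts <= msum m *)
Definition lamT n (m : 'I_n -> nat) : finType :=
  {ffun 'I_n -> (msum m).-bseq 'I_(msum m).+1}.

Definition pseq n (m : 'I_n -> nat) (lam : lamT m) (i : 'I_n) : seq nat :=
  [seq nat_of_ord x | x <- (lam i : seq _)].

Definition in_S n (sp : {set 'I_n}) (m : 'I_n -> nat) (lam : lamT m) : bool :=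
  [forall i, is_partition (m i) (pseq lam i) &&
             ((i \notin sp) ==> (pseq lam i == nseq (m i) 1))].

(* vertices (i, r) of G(lam, m), with i in supp m and r < length(lam_i)
   (r is 0-indexed here, i.e. r stands for r+1 in the paper) *)
Definition Gvert n (m : 'I_n -> nat) (lam : lamT m) : predArgType :=
  {x : 'I_n * 'I_(msum m) | (0 < m x.1) && (x.2 < size (lam x.1))}.

Definition Gedges n (E : {set {set 'I_n}}) (m : 'I_n -> nat) (lam : lamT m)
    : {set {set Gvert lam}} :=
  [set A : {set Gvert lam} |
     [exists x : Gvert lam, exists y : Gvert lam,
        [&& (val x).1 == (val y).1, x != y & A == [set x; y]]]
     || [exists e in E,
        [&& [forall i in e, 0 < m i],
            [forall x in A, (val x).1 \in e] &
            [forall i in e, #|[set x in A | (val x).1 == i]| == 1]]]].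

(* A proper colouring c of G(lam, m) is injective on each clique {(i, r)}_r, so it determines
   the map Gamma_c giving the colour c(i, r) multiplicity lam_i(r) at vertex i.  The edges of
   kind (b) are not monochromatic exactly when Gamma_c satisfies the edge condition, so Gamma_c
   is marked, and its type (the nonincreasing list of nonzero multiplicities at each i) is lam.
   Conversely a marked Gamma of type lam equals Gamma_c for exactly prod_i prod_k (d_k^lam_i)!
   colourings c, which differ by permuting the vertices (i, r) with equal parts lam_i(r).
   Grouping marked maps by their type gives the identity. *)

From HB Require Import structures.
From mathcomp Require Import all_boot all_order all_algebra.
Set Implicit Arguments. Unset Strict Implicit. Unset Printing Implicit Defensive.
Import GRing.Theory Num.Theory.

Section ClassInjectiveMaps.

Variables (X Y K : finType) (cls : X -> K).

Definition class_injb (D : {set X}) (f : X -> Y) : bool :=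
  [forall x in D, forall y in D, (cls x == cls y) && (f x == f y) ==> (x == y)].

Lemma class_injP (D : {set X}) (f : X -> Y) :
  reflect {in D &, forall x y, cls x = cls y -> f x = f y -> x = y} (class_injb D f).
Proof.
apply: (iffP forall_inP) => [inj x y xD yD cxy fxy | inj x xD].
  by have /forall_inP/(_ y yD) := inj x xD; rewrite cxy fxy !eqxx => /eqP.
by apply/forall_inP => y yD; apply/implyP => /andP[/eqP cxy /eqP fxy]; apply/eqP/inj.
Qed.

Variables (y0 : Y) (C : K -> {set Y}).

Definition class_inj_maps (D : {set X}) : {set {ffun X -> Y}} :=
  [set f in pfamily y0 D (fun x => C (cls x)) | class_injb D f].

Lemma class_inj_mapsP (D : {set X}) (f : {ffun X -> Y}) :
  reflect [/\ {in D, forall x, f x \in C (cls x)}, {in [predC D], forall x, f x = y0}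
            & {in D &, forall x y, cls x = cls y -> f x = f y -> x = y}]
          (f \in class_inj_maps D).
Proof.
rewrite inE; apply: (iffP andP) => [[/familyP fD /class_injP inj] | [fD f0 /class_injP inj]].
  split=> // x xD; have := fD x; first by rewrite xD.
  by rewrite inE in xD; rewrite (negbTE xD) inE => /eqP.
split=> //; apply/familyP => x /=; case: ifPn => [/fD // | xD].
by rewrite inE f0.
Qed.

Lemma class_inj_maps0 : class_inj_maps set0 = [set [ffun=> y0]].
Proof.
apply/setP => f; rewrite in_set1; apply/class_inj_mapsP/eqP => [[_ f0 _] | ->].
  by apply/ffunP => x; rewrite ffunE f0 // !inE.
by split=> [x|x _|x]; rewrite ?inE ?ffunE.
Qed.

Section AddPoint.

Variables (a : X) (B : {set X}).
Hypothesis aB : a \notin B.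

Definition drop_point (f : {ffun X -> Y}) : {ffun X -> Y} :=
  [ffun x => if x == a then y0 else f x].

Definition set_point (h : {ffun X -> Y}) (v : Y) : {ffun X -> Y} :=
  [ffun x => if x == a then v else h x].

Let peers := [set x in B | cls x == cls a].

Let neq_a x : x \in B -> (x == a) = false.
Proof. by apply: contraTF => /eqP ->. Qed.

Lemma drop_point_maps f :
  f \in class_inj_maps (a |: B) -> drop_point f \in class_inj_maps B.
Proof.
case/class_inj_mapsP => fC f0 inj; apply/class_inj_mapsP; split.
- by move=> x xB; rewrite ffunE neq_a // fC // !inE xB orbT.
- move=> x /negbTE xB; rewrite ffunE; case: eqP => // /eqP xa.
  by rewrite f0 // !inE xB (negbTE xa).
- move=> x y xB yB; rewrite !ffunE !neq_a //.
  by apply: inj; rewrite !inE ?xB ?yB orbT.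
Qed.

Lemma point_value f :
  f \in class_inj_maps (a |: B) -> f a \in C (cls a) :\: drop_point f @: peers.
Proof.
case/class_inj_mapsP => fC _ inj; rewrite !inE fC ?setU11 // andbT.
apply/imsetP => -[x]; rewrite inE => /andP[xB /eqP cx]; rewrite ffunE neq_a // => fx.
by move: aB; rewrite (inj a x) ?xB // !inE ?xB ?eqxx ?orbT.
Qed.

Lemma set_point_maps h v :
  h \in class_inj_maps B -> v \in C (cls a) :\: h @: peers ->
  set_point h v \in class_inj_maps (a |: B).
Proof.
case/class_inj_mapsP => hC h0 inj; rewrite inE => /andP[v_new vC].
have v_neq y : y \in B -> cls y = cls a -> v <> h y.
  by move=> yB cy vy; case/imsetP: v_new; exists y; rewrite // inE yB cy eqxx.
apply/class_inj_mapsP; split.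
- move=> x; rewrite !inE ffunE; case: eqP => [-> // | _ /= xB]; exact: hC.
- move=> x; rewrite !inE negb_or ffunE => /andP[/negbTE -> xB]; exact: h0.
- move=> x y; rewrite !inE !ffunE.
  case: eqP => [-> _ | _ /= xB]; case: eqP => [-> // | _ /= yB].
  + by move=> cy vy; case: (v_neq y yB (esym cy) vy).
  + by move=> _ cx hv; case: (v_neq x xB cx (esym hv)).
  + exact: inj.
Qed.

Lemma drop_set_point h v :
  h \in class_inj_maps B -> drop_point (set_point h v) = h.
Proof.
case/class_inj_mapsP => _ h0 _; apply/ffunP => x; rewrite !ffunE.
by case: eqP => // ->; rewrite h0.
Qed.

Lemma set_drop_point f : set_point (drop_point f) (f a) = f.
Proof. by apply/ffunP => x; rewrite !ffunE; case: eqP => [-> |]. Qed.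

Lemma card_class_inj_maps_fibre h :
  h \in class_inj_maps B ->
  #|[set f in class_inj_maps (a |: B) | drop_point f == h]| = #|C (cls a)| - #|peers|.
Proof.
move=> hB; have /class_inj_mapsP[hC _ inj] := hB.
have -> : [set f in class_inj_maps (a |: B) | drop_point f == h] =
          set_point h @: (C (cls a) :\: h @: peers).
  apply/setP => f; rewrite inE; apply/andP/imsetP => [[fD /eqP <-] | [v vC ->]].
    by exists (f a); [exact: point_value | rewrite set_drop_point].
  by rewrite set_point_maps // drop_set_point.
rewrite card_in_imset; last by move=> u w _ _ /ffunP/(_ a); rewrite !ffunE eqxx.
rewrite cardsD (setIidPr _) ?card_in_imset //.
  by move=> x y /setIdP[xB /eqP cx] /setIdP[yB /eqP cy]; apply: inj; rewrite // cx cy.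
by apply/subsetP => _ /imsetP[x /setIdP[xB /eqP cx] ->]; rewrite -cx hC.
Qed.

Lemma card_class_inj_maps_add :
  #|class_inj_maps (a |: B)| = #|class_inj_maps B| * (#|C (cls a)| - #|peers|).
Proof.
rewrite -sum1_card (partition_big drop_point (mem (class_inj_maps B))) /=; last first.
  exact: drop_point_maps.
rewrite -sum_nat_const; apply: eq_bigr => h hB.
by rewrite sum1dep_card -(card_class_inj_maps_fibre hB); apply: eq_card => f; rewrite inE.
Qed.

End AddPoint.

Lemma card_class_inj_maps (D : {set X}) :
  #|class_inj_maps D| = \prod_k #|C k| ^_ #|[set x in D | cls x == k]|.
Proof.
elim: {D}#|D| {-2}D (erefl #|D|) => [|d IH] D cardD.
  have -> : D = set0 by apply/eqP; rewrite -cards_eq0 cardD.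
  rewrite class_inj_maps0 cards1 big1 // => k _.
  by rewrite (_ : [set x in set0 | _] = set0) ?cards0 //; apply/setP => x; rewrite !inE.
have [a aD] : exists a, a \in D by apply/card_gt0P; rewrite cardD.
have aB : a \notin D :\ a by rewrite !inE eqxx.
rewrite -(setD1K aD) card_class_inj_maps_add // IH; last first.
  by move: cardD; rewrite (cardsD1 a) aD => -[].
rewrite (bigD1 (cls a)) //= [RHS](bigD1 (cls a)) //= mulnAC; congr (_ * _).
  have -> : [set x in a |: D :\ a | cls x == cls a] = a |: [set x in D :\ a | cls x == cls a].
    by apply/setP => x; rewrite !inE; case: eqP => // ->; rewrite eqxx.
  by rewrite cardsU1 inE (negbTE aB) ffactnSr.
apply: eq_bigr => k ka; congr (_ ^_ _); apply: eq_card => x; rewrite !inE.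
by case: eqP => // ->; rewrite eq_sym (negbTE ka) andbF.
Qed.

End ClassInjectiveMaps.

Section Hypergraph.

Variables (n : nat) (E : {set {set 'I_n}}) (sp : {set 'I_n}) (m : 'I_n -> nat) (q : nat).

Local Notation N := (msum m).

Lemma m_le_msum i : m i <= N.
Proof. by rewrite /msum (bigD1 i) //= leq_addr. Qed.

Definition multicolouring := {ffun 'I_n -> {ffun 'I_q -> 'I_N.+1}}.

Definition no_common_colour (G : multicolouring) : bool :=
  [forall e in E, ~~ [exists c, [forall v in e, 0 < (G v c : nat)]]].

Definition marked (G : multicolouring) : bool :=
  [&& [forall v, \sum_(c < q) (G v c : nat) == m v],
      [forall v, (v \notin sp) ==> [forall c, (G v c : nat) <= 1]] &
      no_common_colour G].

Lemma marked_countE : marked_count E sp m q = #|[pred G : multicolouring | marked G]|.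
Proof. by []. Qed.

Lemma marked_sum G v : marked G -> \sum_(c < q) (G v c : nat) = m v.
Proof. by case/and3P => /forallP/(_ v)/eqP. Qed.

Definition has_type (lam : lamT m) (G : multicolouring) : bool :=
  [forall i, (0 < m i) ==> [forall j : 'I_N.+1,
     (0 < j) ==> (#|[set c | G i c == j]| == count_mem j (lam i))]].

Lemma has_typeP lam G i (j : 'I_N.+1) : has_type lam G -> 0 < m i -> 0 < j ->
  #|[set c | G i c == j]| = count_mem j (lam i).
Proof. by move=> /forallP/(_ i)/implyP + mi j0 => /(_ mi)/forallP/(_ j)/implyP/(_ j0)/eqP. Qed.

Section Vertices.

Variable lam : lamT m.

Definition part (x : Gvert lam) : 'I_N.+1 := nth ord0 (lam (val x).1) (val x).2.

Lemma Gvert_supp (x : Gvert lam) : 0 < m (val x).1.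
Proof. by case/andP: (valP x). Qed.

Lemma part_mem (x : Gvert lam) : part x \in lam (val x).1.
Proof. by rewrite mem_nth //; case/andP: (valP x). Qed.

Lemma sum_Gvert_over i (F : 'I_n -> nat -> nat) : 0 < m i ->
  \sum_(x : Gvert lam | (val x).1 == i) F (val x).1 (val x).2 =
  \sum_(r < size (lam i)) F i r.
Proof.
move=> mi; pose A := [pred x : 'I_n * 'I_N | (0 < m x.1) && (x.2 < size (lam x.1))].
rewrite -(big_sub_cond A (fun x => x.1 == i) (fun x => F x.1 x.2)).
rewrite (eq_bigl (fun x : 'I_n * 'I_N => (x.1 == i) && (x.2 < size (lam i)))); last first.
  by move=> [a b]; rewrite !inE /= andbC; case: eqP => [-> | _]; rewrite ?mi.
rewrite -(pair_big (fun a => a == i) (fun b : 'I_N => b < size (lam i)) F) /= big_pred1_eq.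
by rewrite (big_ord_widen N (F i) (size_bseq _)) (big_ord_narrow (size_bseq _)).
Qed.

Lemma count_pseq i (j : 'I_N.+1) : count_mem (j : nat) (pseq lam i) = count_mem j (lam i).
Proof. by rewrite /pseq count_map; apply: eq_count => y; rewrite /= val_eqE. Qed.

Lemma card_part_class i j : 0 < m i ->
  #|[set x : Gvert lam | ((val x).1 == i) && (part x == j)]| = count_mem j (lam i).
Proof.
move=> mi; rewrite -sum1dep_card big_mkcondr /=.
rewrite (sum_Gvert_over (fun a r => nth ord0 (lam a) r == j : nat)) //.
rewrite -sum1_count (big_nth ord0) big_mkord [RHS]big_mkcond /=.
by apply: eq_bigr => r _; case: (_ == j).
Qed.

Lemma sum_parts i : 0 < m i ->
  \sum_(x : Gvert lam | (val x).1 == i) (part x : nat) = sumn (pseq lam i).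
Proof.
move=> mi; rewrite (sum_Gvert_over (fun a r => nth ord0 (lam a) r : nat)) //.
by rewrite sumnE /pseq big_map (big_nth ord0) big_mkord.
Qed.

Definition clique_inj (c : {ffun Gvert lam -> 'I_q}) : bool :=
  [forall x, forall y, ((val x).1 == (val y).1) && (c x == c y) ==> (x == y)].

Lemma clique_injP (c : {ffun Gvert lam -> 'I_q}) :
  reflect (forall x y, (val x).1 = (val y).1 -> c x = c y -> x = y) (clique_inj c).
Proof.
apply: (iffP forallP) => [inj x y xy cxy | inj x].
  by have /forallP/(_ y) := inj x; rewrite xy cxy !eqxx => /eqP.
by apply/forallP => y; apply/implyP => /andP[/eqP xy /eqP cxy]; apply/eqP/inj.
Qed.

(* The colour [col] gets at [i] the part of a vertex over [i] coloured [col], or 0 if there is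
   none; this vertex is unique when [c] is clique-injective. *)
Definition induced (c : {ffun Gvert lam -> 'I_q}) : multicolouring :=
  [ffun i => [ffun col =>
     if [pick x | ((val x).1 == i) && (c x == col)] is Some x then part x else ord0]].

Variant induced_spec (c : {ffun Gvert lam -> 'I_q}) (i : 'I_n) (col : 'I_q) : 'I_N.+1 -> Type :=
  | InducedVertex x of (val x).1 = i & c x = col : induced_spec c i col (part x)
  | InducedNone of (forall x, ~~ (((val x).1 == i) && (c x == col))) :
      induced_spec c i col ord0.

Lemma inducedP (c : {ffun Gvert lam -> 'I_q}) i col : induced_spec c i col (induced c i col).
Proof.
rewrite !ffunE; case: pickP => [x /andP[/eqP xi /eqP cx] | none].
  exact: InducedVertex.
by apply: InducedNone => x; rewrite none.
Qed.

Section InducedMulticolouring.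

Variable c : {ffun Gvert lam -> 'I_q}.
Hypothesis c_inj : clique_inj c.

Lemma induced_at x : induced c (val x).1 (c x) = part x.
Proof.
case: inducedP => [y yx cy | none]; first by rewrite ((clique_injP _ c_inj) y x).
by have := none x; rewrite !eqxx.
Qed.

Lemma sum_induced i :
  \sum_(col < q) (induced c i col : nat) = \sum_(x : Gvert lam | (val x).1 == i) (part x : nat).
Proof.
rewrite (partition_big c xpredT) //=; apply: eq_bigr => col _.
case: inducedP => [x xi cx | none]; last by rewrite big_pred0 // => y; exact/negbTE/none.
rewrite (bigD1 x) /=; last by rewrite xi cx !eqxx.
rewrite big1 ?addn0 // => y /andP[/andP[/eqP yi /eqP cy] yx].
by move: yx; rewrite ((clique_injP _ c_inj) y x) ?eqxx // ?yi ?cy.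
Qed.

Lemma card_induced_class i (j : 'I_N.+1) : 0 < j ->
  #|[set col | induced c i col == j]| =
  #|[set x : Gvert lam | ((val x).1 == i) && (part x == j)]|.
Proof.
move=> j0; rewrite -(card_in_imset (f := c)); last first.
  move=> x y; rewrite !inE => /andP[/eqP xi _] /andP[/eqP yi _].
  by apply: (clique_injP _ c_inj); rewrite xi yi.
congr #|pred_of_set _|; apply/setP => col; rewrite inE; apply/idP/imsetP.
  case: inducedP => [x xi cx /eqP xj | _ /eqP j_0]; last by rewrite -j_0 in j0.
  by exists x; rewrite // inE xi xj !eqxx.
by move=> [x /setIdP[/eqP xi /eqP xj] ->]; rewrite -xi induced_at xj.
Qed.

Lemma induced_has_type : has_type lam (induced c).
Proof.
apply/forallP => i; apply/implyP => mi; apply/forallP => j; apply/implyP => j0.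
by rewrite card_induced_class // card_part_class.
Qed.

End InducedMulticolouring.

Hypothesis lamS : in_S sp lam.

Lemma in_S_partition i : is_partition (m i) (pseq lam i).
Proof. by have /forallP/(_ i)/andP[] := lamS. Qed.

Lemma in_S_ones i : i \notin sp -> pseq lam i = nseq (m i) 1.
Proof. by have /forallP/(_ i)/andP[_ /implyP ones] := lamS => /ones/eqP. Qed.

Lemma part_gt0 x : 0 < part x.
Proof.
have /and3P[_ /allP pos _] := in_S_partition (val x).1.
by apply: pos; rewrite /pseq map_f ?part_mem.
Qed.

Lemma part_nonspecial x : (val x).1 \notin sp -> part x = 1 :> nat.
Proof.
move/in_S_ones => ones; have : (part x : nat) \in pseq lam (val x).1.
  by rewrite /pseq map_f ?part_mem.
by rewrite ones => /nseqP[].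
Qed.

Lemma count0_pseq i : count_mem 0 (pseq lam i) = 0.
Proof.
apply/count_memPn/negP => in0.
by have /and3P[_ /allP/(_ 0 in0) //] := in_S_partition i.
Qed.

Lemma in_S_nil i : m i = 0 -> lam i = [::] :> seq _.
Proof.
have := in_S_partition i; rewrite /is_partition /pseq => + mi0; rewrite mi0.
case: (lam i : seq _) => [//|y s] /and3P[_ /andP[y0 _]] /=.
by rewrite addn_eq0 => /andP[/eqP y_0]; rewrite y_0 in y0.
Qed.

Lemma induced_gt0 c i col :
  (0 < induced c i col) = [exists x, ((val x).1 == i) && (c x == col)].
Proof.
case: inducedP => [x xi cx | none]; apply/esym/existsP.
  by rewrite part_gt0; exists x; rewrite xi cx !eqxx.
by move=> -[x]; apply/negP/none.
Qed.

Definition proper (c : {ffun Gvert lam -> 'I_q}) : bool :=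
  [forall e in Gedges E lam, [exists x in e, exists y in e, c x != c y]].

Lemma chrom_countE : chrom_count (Gedges E lam) q = #|[pred c | proper c]|.
Proof. by []. Qed.

Definition shares_colour (c : {ffun Gvert lam -> 'I_q}) (e : {set 'I_n}) col : bool :=
  [forall i in e, [exists x, ((val x).1 == i) && (c x == col)]].

Lemma no_common_colour_induced c :
  no_common_colour (induced c) = [forall e in E, ~~ [exists col, shares_colour c e col]].
Proof.
apply: eq_forallb => e; congr (_ ==> ~~ _); apply: eq_existsb => col.
by apply: eq_forallb => i; rewrite induced_gt0.
Qed.

Lemma proper_clique_inj c : proper c -> clique_inj c.
Proof.
move=> /forall_inP prop; apply/clique_injP => x y xy cxy; apply/eqP/negPn/negP => x_y.
have : [set x; y] \in Gedges E lam.
  rewrite inE; apply/orP; left.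
  by apply/existsP; exists x; apply/existsP; exists y; rewrite xy x_y !eqxx.
move=> /prop/exists_inP[u /set2P u_xy /exists_inP[v /set2P v_xy]].
by case: u_xy v_xy => -> [] ->; rewrite ?cxy eqxx.
Qed.

Lemma proper_no_shared c :
  proper c -> [forall e in E, ~~ [exists col, shares_colour c e col]].
Proof.
move=> prop; have /clique_injP c_inj := proper_clique_inj prop.
apply/forall_inP => e eE; apply/existsP => -[col /forall_inP shared].
pose A := [set x : Gvert lam | ((val x).1 \in e) && (c x == col)].
have AG : A \in Gedges E lam.
  rewrite inE; apply/orP; right; apply/exists_inP; exists e => //; apply/and3P; split.
  - apply/forall_inP => i /shared/existsP[x /andP[/eqP <- _]]; exact: Gvert_supp.
  - by apply/forall_inP => x; rewrite inE => /andP[].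
  apply/forall_inP => i ie; have /existsP[x /andP[/eqP xi /eqP cx]] := shared i ie.
  suff -> : [set y in A | (val y).1 == i] = [set x] by rewrite cards1.
  apply/setP => y; rewrite !inE; apply/idP/eqP => [| ->]; last by rewrite xi cx ie !eqxx.
  by case/andP => /andP[_ /eqP cy] /eqP yi; apply: c_inj; rewrite ?yi ?cy.
have /exists_inP[u + /exists_inP[v +]] := forall_inP prop A AG.
by rewrite !inE => /andP[_ /eqP ->] /andP[_ /eqP ->]; rewrite eqxx.
Qed.

Hypothesis hE : forall e, e \in E -> e != set0.

Lemma proper_of_no_shared c : clique_inj c ->
  [forall e in E, ~~ [exists col, shares_colour c e col]] -> proper c.
Proof.
move=> /clique_injP c_inj /forall_inP no_shared; apply/forall_inP => A.
rewrite inE => /orP[/existsP[x /existsP[y /and3P[xy x_y /eqP ->]]] | ].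
  apply/exists_inP; exists x; rewrite ?set21 //; apply/exists_inP; exists y; rewrite ?set22 //.
  by apply: contra x_y => /eqP cxy; apply/eqP/c_inj => //; apply/eqP.
move=> /exists_inP[e eE /and3P[_ _ /forall_inP one]].
apply: contraT => mono.
have same u v : u \in A -> v \in A -> c u = c v.
  by move=> uA vA; apply/eqP; apply: contraNT mono => cuv; apply/exists_inP; exists u => //;
     apply/exists_inP; exists v.
have over i : i \in e -> exists2 x, x \in A & (val x).1 = i.
  move=> /one/eqP one_i; have : 0 < #|[set x in A | (val x).1 == i]| by rewrite one_i.
  by case/card_gt0P => x; rewrite inE => /andP[xA /eqP xi]; exists x.
have /set0Pn[i0 i0e] := hE eE; have [x0 x0A _] := over i0 i0e.
case/negP: (no_shared e eE); apply/existsP; exists (c x0).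
apply/forall_inP => i /over[x xA xi]; apply/existsP; exists x.
by rewrite xi (same x x0) ?eqxx.
Qed.

Lemma proper_induced c : proper c = clique_inj c && no_common_colour (induced c).
Proof.
rewrite no_common_colour_induced; apply/idP/andP => [prop | [c_inj]].
  by split; [exact: proper_clique_inj | exact: proper_no_shared].
exact: proper_of_no_shared.
Qed.

Lemma induced_marked c : proper c -> marked (induced c).
Proof.
rewrite proper_induced => /andP[c_inj no_common].
apply/and3P; split=> //.
- apply/forallP => i; rewrite sum_induced //; have [mi0 | mi] := posnP (m i).
    by rewrite big_pred0 ?mi0 // => x; apply/negbTE/eqP => xi; move: (Gvert_supp x); rewrite xi mi0.
  by rewrite sum_parts //; case/and3P: (in_S_partition i).
- apply/forallP => i; apply/implyP => isp; apply/forallP => col.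
  by case: inducedP => // x xi _; rewrite part_nonspecial ?xi.
Qed.

Definition fibre (G : multicolouring) (c : {ffun Gvert lam -> 'I_q}) : bool :=
  [forall x, G (val x).1 (c x) == part x] && clique_inj c.

Lemma induced_fibre G c : marked G -> has_type lam G -> fibre G c -> induced c = G.
Proof.
move=> GM Gtype /andP[/forallP Gc c_inj].
apply/ffunP => i; apply/ffunP => col; case: inducedP => [x <- <- | none].
  by rewrite (eqP (Gc x)).
apply/val_inj/esym/eqP; rewrite /= -leqn0 leqNgt; apply/negP => Gpos.
have mi : 0 < m i by rewrite -(marked_sum i GM) (bigD1 col) //= ltn_addr.
(* [c] maps the vertices over [i] with part [G i col] injectively into the colours where [G i]
   takes this value; [has_type] says both sets have the same size, so [col] is hit. *)
pose cls := [set x : Gvert lam | ((val x).1 == i) && (part x == G i col)].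
have cls_onto : c @: cls = [set col' | G i col' == G i col].
  apply/eqP; rewrite eqEcard (has_typeP Gtype mi Gpos) -(card_part_class _ mi).
  rewrite card_in_imset ?leqnn ?andbT; last first.
    move=> x y; rewrite !inE => /andP[/eqP xi _] /andP[/eqP yi _].
    by apply: (clique_injP _ c_inj); rewrite xi yi.
  apply/subsetP => _ /imsetP[x /setIdP[/eqP xi /eqP xj] ->].
  by rewrite inE -{1}xi (eqP (Gc x)) xj.
have : col \in c @: cls by rewrite cls_onto inE.
by case/imsetP => x /setIdP[xi _] colx; have := none x; rewrite xi colx eqxx.
Qed.

Lemma proper_induced_eq G c : marked G -> has_type lam G ->
  (proper c && (induced c == G)) = fibre G c.
Proof.
move=> GM Gtype; apply/idP/idP => [/andP[prop /eqP <-] | cG].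
  have c_inj := proper_clique_inj prop; rewrite /fibre c_inj andbT.
  by apply/forallP => x; rewrite induced_at.
have /andP[_ c_inj] := cG.
rewrite proper_induced c_inj (induced_fibre GM Gtype cG) eqxx andbT.
by case/and3P: GM.
Qed.

(* The default colour [Ordinal hq] plays no role, the domain being [setT]. *)
Lemma fibre_class_inj_maps G (hq : 0 < q) :
  [set c | fibre G c] =
  class_inj_maps (fun x => ((val x).1, part x)) (Ordinal hq)
                 (fun k => [set col | G k.1 col == k.2]) setT.
Proof.
apply/setP => c; rewrite inE.
apply/andP/class_inj_mapsP => [[/forallP Gc /clique_injP c_inj] | [Gc _ c_inj]].
  split=> [x _ | x | x y _ _ [xy _]]; [by rewrite inE Gc | by rewrite !inE | exact: c_inj].
have Gc' x : G (val x).1 (c x) = part x by have := Gc x (in_setT x); rewrite inE => /eqP.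
split; first by apply/forallP => x; rewrite Gc'.
apply/clique_injP => x y xy cxy; apply: c_inj; rewrite ?in_setT //.
by rewrite -!Gc' xy cxy.
Qed.

Lemma card_fibre G : 0 < q -> has_type lam G ->
  #|[set c | fibre G c]| =
  \prod_(i < n | 0 < m i) \prod_(1 <= k < N.+1) (count_mem k (pseq lam i))`!.
Proof.
move=> hq Gtype; rewrite fibre_class_inj_maps card_class_inj_maps.
pose F i j := #|[set col | G i col == j]| ^_
              #|[set x : Gvert lam | ((val x).1 == i) && (part x == j)]|.
rewrite (eq_bigr (fun k => F k.1 k.2)); last first.
  by move=> [i j] _; congr (_ ^_ _); apply: eq_card => x; rewrite !inE xpair_eqE.
rewrite -(pair_bigA _ F) [RHS]big_mkcond /=; apply: eq_bigr => i _.
have [mi0 | mi] := posnP (m i).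
  rewrite big1 // => j _; rewrite /F.
  suff -> : [set x : Gvert lam | ((val x).1 == i) && (part x == j)] = set0.
    by rewrite cards0 ffactn0.
  apply/setP => x; rewrite !inE; apply/negbTE/negP => /andP[/eqP xi _].
  by move: (Gvert_supp x); rewrite xi mi0.
rewrite (eq_bigr (fun j : 'I_N.+1 => (count_mem (j : nat) (pseq lam i))`!)); last first.
  move=> j _; rewrite /F card_part_class // -count_pseq.
  have [-> | j_pos] := posnP j; first by rewrite count0_pseq ffactn0.
  by rewrite (has_typeP Gtype mi j_pos) -count_pseq ffactnn.
rewrite -(big_mkord xpredT (fun k => (count_mem k (pseq lam i))`!)) big_ltn //.
by rewrite count0_pseq mul1n.
Qed.

End Vertices.

Section TypeOf.

Variable G : multicolouring.

Definition positive_values i : seq 'I_N.+1 := [seq x : 'I_N.+1 <- codom (G i) | 0 < x].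

(* The default [::] of [insubd] is never used for a marked [G] (see [type_of_val]). *)
Definition type_of : lamT m :=
  [ffun i => insubd (@Bseq N _ [::] (leq0n N))
                    (sort (relpre val geq) (positive_values i))].

Lemma sumn_positive_values i :
  sumn (map val (positive_values i)) = \sum_(c < q) (G i c : nat).
Proof.
have drop0 (s : seq 'I_N.+1) : sumn (map val [seq x : 'I_N.+1 <- s | 0 < x]) = sumn (map val s).
  by elim: s => //= x s IH; case: posnP => [x0 | _] /=; rewrite IH ?x0.
by rewrite drop0 codomE -map_comp sumnE big_map -big_enum.
Qed.

Hypothesis GM : marked G.

Lemma type_of_val i : type_of i = sort (relpre val geq) (positive_values i) :> seq _.
Proof.
rewrite ffunE val_insubd size_sort ifT //.
have pos : all (fun x : 'I_N.+1 => 0 < x) (positive_values i).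
  by apply/allP => x; rewrite mem_filter => /andP[].
rewrite (leq_trans _ (m_le_msum i)) // -(marked_sum i GM) -sumn_positive_values.
elim: (positive_values i) pos => //= x s IH /andP[x0 /IH s_le]; by rewrite -add1n leq_add.
Qed.

Lemma perm_type_of i : perm_eq (pseq type_of i) (map val (positive_values i)).
Proof. by rewrite /pseq type_of_val perm_map // perm_sort. Qed.

Lemma type_of_in_S : in_S sp type_of.
Proof.
apply/forallP => i; have perm_i := perm_type_of i.
have sum_i : sumn (pseq type_of i) = m i.
  by rewrite (perm_sumn perm_i) sumn_positive_values marked_sum.
apply/andP; split.
  apply/and3P; split; last by rewrite sum_i.
    by rewrite /pseq type_of_val sorted_map; apply: sort_sorted => a b; exact: leq_total.
  by rewrite (perm_all _ perm_i) all_map; apply/allP => x; rewrite mem_filter => /andP[].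
apply/implyP => isp.
have ones : all (pred1 1) (pseq type_of i).
  rewrite (perm_all _ perm_i) all_map; apply/allP => x.
  rewrite mem_filter => /andP[x0 /codomP[c xc]]; subst x.
  have /and3P[_ /forallP/(_ i)/implyP/(_ isp)/forallP/(_ c) Gc1 _] := GM.
  by rewrite /= eqn_leq Gc1 x0.
move/all_pred1P: ones => ones; apply/eqP; rewrite ones; congr nseq.
by rewrite -sum_i {2}ones sumn_nseq ?mul1n ?muln1.
Qed.

Lemma type_of_has_type : has_type type_of G.
Proof.
apply/forallP => i; apply/implyP => _; apply/forallP => j; apply/implyP => j0.
have sort_perm : perm_eq (sort (relpre val geq) (positive_values i)) (positive_values i).
  by rewrite perm_sort.
rewrite type_of_val (permP sort_perm) count_filter.
rewrite (eq_count (a2 := pred1 j)); last by move=> x /=; case: eqP => // ->; rewrite j0.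
rewrite codomE cardE /enum_mem size_filter count_map count_filter.
by apply/eqP/eq_count => c; rewrite /= !inE andbT.
Qed.

End TypeOf.

Lemma has_type_unique G lam lam' : in_S sp lam -> in_S sp lam' ->
  has_type lam G -> has_type lam' G -> lam = lam'.
Proof.
move=> lamS lamS' Gtype Gtype'; apply/ffunP => i; apply: val_inj => /=.
have [mi0 | mi] := posnP (m i); first by rewrite !in_S_nil.
have sorted_lam (l : lamT m) : in_S sp l -> sorted (relpre val geq) (l i).
  by move=> lS; have /and3P[+ _ _] := in_S_partition lS i; rewrite /pseq sorted_map.
apply: (sorted_eq _ _ (sorted_lam _ lamS) (sorted_lam _ lamS')).
- by move=> a b c /= ba cb; exact: leq_trans cb ba.
- by move=> a b /= ab; apply/val_inj/eqP; rewrite eqn_leq andbC.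
apply/allP => j _ /=; have [j0 | j_pos] := posnP j.
  by rewrite -!count_pseq j0 !count0_pseq.
by rewrite -(has_typeP Gtype mi j_pos) -(has_typeP Gtype' mi j_pos).
Qed.

Lemma marked_count_by_type :
  marked_count E sp m q =
  \sum_(lam : lamT m | in_S sp lam) #|[set G | marked G && has_type lam G]|.
Proof.
rewrite marked_countE -sum1_card (partition_big type_of (@in_S n sp m)) /=; last first.
  by move=> G /type_of_in_S.
apply: eq_bigr => lam lamS; rewrite sum1dep_card; apply: eq_card => G; rewrite !inE.
have [GM | //] := boolP (marked G); apply/eqP/idP => [<- | Gtype].
  exact: type_of_has_type.
exact: has_type_unique (type_of_in_S GM) lamS (type_of_has_type GM) Gtype.
Qed.

Lemma chrom_count_by_fibre lam : (forall e, e \in E -> e != set0) -> in_S sp lam ->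
  chrom_count (Gedges E lam) q =
  \sum_(G : multicolouring | marked G && has_type lam G)
     #|[set c : {ffun Gvert lam -> 'I_q} | fibre G c]|.
Proof.
move=> hE lamS; rewrite chrom_countE -sum1_card.
rewrite (partition_big (induced (lam := lam)) (fun G => marked G && has_type lam G)) /=.
  apply: eq_bigr => G /andP[GM Gtype]; rewrite sum1dep_card; apply: eq_card => c.
  by rewrite !inE proper_induced_eq.
move=> c prop; rewrite induced_marked //=.
exact/induced_has_type/proper_clique_inj.
Qed.

End Hypergraph.

Unset Implicit Arguments.

Theorem proposition5p2 (n : nat) (E : {set {set 'I_n}}) (sp : {set 'I_n})
    (m : 'I_n -> nat) (hE : forall e, e \in E -> e != set0)
    (q : nat) (hq : (0 < q)%N) :
  ((marked_count E sp m q)%:R : rat) =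
  (\sum_(lam : lamT m | in_S sp lam)
     (chrom_count (Gedges E lam) q)%:R /
     (\prod_(i < n | (0 < m i)%N)
        \prod_(1 <= k < (msum m).+1) (count_mem k (pseq lam i))`!)%:R)%R.
Proof.
rewrite marked_count_by_type natr_sum; apply: eq_bigr => lam lamS.
set d := \prod_(i < n | _) _.
rewrite (chrom_count_by_fibre q hE lamS) (eq_bigr (fun _ => d)); last first.
  by move=> G /andP[_ Gtype]; rewrite (card_fibre lamS hq Gtype).
have d_gt0 : (0 < d)%N by apply: prodn_gt0 => i; apply: prodn_gt0 => k; exact: fact_gt0.
rewrite sum_nat_const natrM mulfK; last by rewrite pnatr_eq0 -lt0n.
by congr (_%:R)%R; apply: eq_card => G; rewrite inE.
Qed.
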